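(* Let $n$ be a natural number and let $(L_x)_{x\in S}$ be an $S$-glued system in which every $L_x$ is semimodular of breadth at most $n$. Then its $S$-glued sum $L$ is semimodular and has breadth at most $n$.
   Context: Let $S$ be a lattice of finite length (every chain in $S$ is finite), with order $\le$, join $\vee$ and meet $\wedge$; $x\prec y$ means that $y$ covers $x$. An \emph{$S$-glued system} is a family $(L_x,\le_x)_{x\in S}$ of lattices of finite length (with join $+_x$, meet $\cdot_x$, least element $0_x$, greatest element $1_x$), whose underlying sets may overlap, such that for all $x,y\in S$: (1) if $x\le y$ and $L_x\cap L_y\ne\emptyset$, then $L_x\cap L_y$ is a filter of $L_x$ and an ideal of $L_y$; (2) in the situation of (1), for all $a,b\in L_x\cap L_y$: $a\le_x b$ iff $a\le_y b$; (3) if $x\prec y$ then $L_x\cap L_y\ne\emptyset$; (4) $L_x\cap L_y\subseteq L_{x\wedge y}\cap L_{x\vee y}$. The \emph{$S$-glued sum} of the system is the set $L=\bigcup_{x\in S}L_x$ equipped with the relation $\le$ defined as the transitive closure of $\bigcup_{x\in S}\le_x$; it is a lattice. A lattice $K$ of finite length is \emph{semimodular} if whenever $b\ne c$ both cover $a$ in $K$, then $b\vee c$ covers both $b$ and $c$. The \emph{breadth} of a lattice $K$ is the supremum of all $m$ for which there is a map $\varphi$ from the Boolean lattice $\mathbf{2}^m$ (all subsets of an $m$-element set) into $K$ with $\varphi(a)\le\varphi(b)\iff a\le b$ for all $a,b$. *)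

From HB Require Import structures.
From mathcomp Require Import all_boot all_order.
From Stdlib Require Import Relations.Relation_Operators.
From Stdlib Require List.
Set Implicit Arguments. Unset Strict Implicit. Unset Printing Implicit Defensive.
Import Order.Theory.

Section RelLattice.
Variables (T : Type) (A : T -> Prop) (le : T -> T -> Prop).

Definition is_poset : Prop :=
  (forall a, A a -> le a a) /\
  (forall a b, A a -> A b -> le a b -> le b a -> a = b) /\
  (forall a b c, A a -> A b -> A c -> le a b -> le b c -> le a c).

Definition is_lub (j a b : T) : Prop :=
  A j /\ le a j /\ le b j /\ forall z, A z -> le a z -> le b z -> le j z.

Definition is_glb (m a b : T) : Prop :=
  A m /\ le m a /\ le m b /\ forall z, A z -> le z a -> le z b -> le z m.

Definition is_lattice : Prop :=
  is_poset /\ forall a b, A a -> A b ->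
    (exists j, is_lub j a b) /\ (exists m, is_glb m a b).

Definition is_chain (C : T -> Prop) : Prop :=
  (forall x, C x -> A x) /\ (forall x y, C x -> C y -> le x y \/ le y x).

Definition finite_length : Prop :=
  forall C, is_chain C -> exists s : seq T, forall x, C x -> List.In x s.

Definition covers (a b : T) : Prop :=
  A a /\ A b /\ le a b /\ a <> b /\
  forall z, A z -> le a z -> le z b -> z = a \/ z = b.

Definition semimodular : Prop :=
  forall a b c, b <> c -> covers a b -> covers a c ->
    forall j, is_lub j b c -> covers b j /\ covers c j.

Definition breadth_le (n : nat) : Prop :=
  forall (m : nat) (phi : {set 'I_m} -> T),
    (forall X, A (phi X)) ->
    (forall X Y, le (phi X) (phi Y) <-> X \subset Y) ->
    (m <= n)%N.

Definition is_filter (F : T -> Prop) : Prop :=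
  (exists a, F a) /\ (forall a, F a -> A a) /\
  (forall a b, F a -> A b -> le a b -> F b) /\
  (forall a b m, F a -> F b -> is_glb m a b -> F m).

Definition is_ideal (I : T -> Prop) : Prop :=
  (exists a, I a) /\ (forall a, I a -> A a) /\
  (forall a b, I a -> A b -> le b a -> I b) /\
  (forall a b j, I a -> I b -> is_lub j a b -> I j).

End RelLattice.

(* S-glued systems: S is a lattice (mathcomp latticeType) of finite length;
   L x is the underlying set of the lattice L_x inside a common universe U,
   with order le x. *)
Definition glued_system (d : Order.disp_t) (S : latticeType d) (U : Type)
    (L : S -> U -> Prop) (le : S -> U -> U -> Prop) : Prop :=
  finite_length (fun _ : S => True) (fun x y => (x <= y)%O) /\
  (forall x, is_lattice (L x) (le x) /\ finite_length (L x) (le x)) /\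
  (forall x y : S, (x <= y)%O -> (exists a, L x a /\ L y a) ->
     is_filter (L x) (le x) (fun a => L x a /\ L y a) /\
     is_ideal (L y) (le y) (fun a => L x a /\ L y a)) /\
  (forall x y : S, (x <= y)%O -> (exists a, L x a /\ L y a) ->
     forall a b, L x a -> L y a -> L x b -> L y b -> (le x a b <-> le y a b)) /\
  (forall x y : S, covers (fun _ : S => True) (fun u v => (u <= v)%O) x y ->
     exists a, L x a /\ L y a) /\
  (forall (x y : S) a, L x a -> L y a -> L (x `&` y)%O a /\ L (x `|` y)%O a).

Definition glued_carrier (d : Order.disp_t) (S : latticeType d) (U : Type)
    (L : S -> U -> Prop) : U -> Prop :=
  fun a => exists x, L x a.

Definition glued_le (d : Order.disp_t) (S : latticeType d) (U : Type)
    (L : S -> U -> Prop) (le : S -> U -> U -> Prop) : U -> U -> Prop :=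
  clos_trans U (fun a b => exists x, L x a /\ L x b /\ le x a b).

From mathcomp Require Import all_boot all_order.
From Stdlib Require Import Relations.Relation_Operators Relations.Operators_Properties.
From Stdlib Require Import Classical ClassicalEpsilon.
From Stdlib Require Import Wellfounded.Inclusion.
From Stdlib Require List FinFun.
Set Implicit Arguments. Unset Strict Implicit. Unset Printing Implicit Defensive.
Import Order.Theory.

(* Inside the glued sum, the blocks containing a given element form a convex
   sublattice of S, and on each block the order of the sum is the block order.
   Walking along covers of the finite-length lattice S, one shows that a join
   computed in a block is a join in the sum, and that any two elements have a join:
   join each with the bottom of a common block above them, then join inside that
   block.  A cover of the sum is a cover inside some block, and two covers of [a]
   live in a common block where their join is computed, so semimodularity is
   inherited.  For breadth, a Boolean cube 2^m in a semimodular lattice of finite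
   length yields m independent covers of a single element u; every cover of u lies
   in the greatest block containing u, so the joins of these covers embed 2^m into
   that block. *)

Lemma exists_minimal (T : Type) (R : T -> T -> Prop) (P : T -> Prop) x :
  well_founded R -> P x -> exists m, P m /\ forall y, P y -> ~ R y m.
Proof.
move=> R_wf; elim/(well_founded_ind R_wf): x => x IH Px.
have [[y [Py Ryx]]|no_pred] := classic (exists y, P y /\ R y x); first exact: IH Ryx Py.
by exists x; split=> // y Py Ryx; apply: no_pred; exists y.
Qed.

(** * Posets on a carrier predicate *)

Section RelPoset.
Variables (T : Type) (A : T -> Prop) (le : T -> T -> Prop).

Definition rel_lt a b := [/\ A a, A b, le a b & a <> b].

Hypothesis poset : is_poset A le.

Lemma rel_le_refl a : A a -> le a a.
Proof. by case: poset => + _; apply. Qed.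

Lemma rel_le_anti a b : A a -> A b -> le a b -> le b a -> a = b.
Proof. by case: poset => _ [+ _]; apply. Qed.

Lemma rel_le_trans a b c : A a -> A b -> A c -> le a b -> le b c -> le a c.
Proof. by case: poset => _ [_]; apply. Qed.

Lemma lub_unique j j' a b : is_lub A le j a b -> is_lub A le j' a b -> j = j'.
Proof.
move=> [Aj [aj [bj j_least]]] [Aj' [aj' [bj' j'_least]]].
exact: rel_le_anti Aj Aj' (j_least _ Aj' aj' bj') (j'_least _ Aj aj bj).
Qed.

Section FiniteLength.
Hypothesis fin : finite_length A le.

Lemma no_descending_seq (f : nat -> T) : ~ (forall n, rel_lt (f n.+1) (f n)).
Proof.
move=> f_desc.
have fA n : A (f n) by case: (f_desc n).
have f_le i d : le (f (i + d)) (f i).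
  elim: d => [|d IH]; first by rewrite addn0; apply: rel_le_refl.
  rewrite addnS; case: (f_desc (i + d)) => A1 _ le1 _.
  exact: rel_le_trans A1 _ (fA i) le1 IH.
have f_inj : FinFun.Injective f.
  suff lt_neq i j : (i < j)%N -> f i <> f j.
    move=> i j fij; case: (ltngtP i j) => // ij.
    - by case: (lt_neq _ _ ij fij).
    - by case: (lt_neq _ _ ij (esym fij)).
  move=> ij fij; have [A1 _ le1 ne1] := f_desc i; apply: ne1.
  apply: rel_le_anti A1 (fA i) le1 _.
  by have := f_le i.+1 (j - i.+1)%N; rewrite subnKC // -fij.
have [s f_in] : exists s : seq T, forall x, (exists n, x = f n) -> List.In x s.
  apply: fin; split=> [_ [n ->] //|_ _ [i ->] [j ->]].
  case: (leqP i j) => [ij|/ltnW ji].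
  - by right; have := f_le i (j - i)%N; rewrite subnKC.
  - by left; have := f_le j (i - j)%N; rewrite subnKC.
have incl : List.incl (List.map f (List.seq 0 (List.length s).+1)) s.
  by move=> _ /List.in_map_iff [n [<- _]]; apply: f_in; exists n.
have := List.NoDup_incl_length (FinFun.Injective_map_NoDup f_inj (List.seq_NoDup _ 0)) incl.
by rewrite List.length_map List.length_seq => /ssrnat.leP; rewrite ltnn.
Qed.

Lemma rel_lt_wf : well_founded rel_lt.
Proof.
move=> x; apply: NNPP => x_nacc.
have [g gP] : exists g : {y | ~ Acc rel_lt y} -> {y | ~ Acc rel_lt y},
    forall y, rel_lt (sval (g y)) (sval y).
  apply: (choice (fun y z => rel_lt (sval z) (sval y))) => -[y y_nacc].
  apply: NNPP => no_pred; apply: (y_nacc); constructor => z zy.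
  by apply: NNPP => z_nacc; apply: no_pred; exists (exist _ z z_nacc).
apply: (@no_descending_seq (fun n => sval (iter n g (exist _ x x_nacc)))) => n.
exact: gP.
Qed.

Lemma lattice_bottom a : is_lattice A le -> A a -> exists b, A b /\ forall c, A c -> le b c.
Proof.
move=> [_ meets] Aa; have [m [Am m_min]] := exists_minimal rel_lt_wf Aa.
exists m; split=> // c Ac; have [_ [g [Ag [gm [gc _]]]]] := meets m c Am Ac.
have [<- //|gm_neq] := classic (g = m).
by case: (m_min g Ag); split.
Qed.

End FiniteLength.
End RelPoset.

Section Duality.
Variables (T : Type) (A : T -> Prop) (le : T -> T -> Prop).
Local Notation ge := (fun a b => le b a).

Lemma dual_poset : is_poset A le -> is_poset A ge.
Proof. by move=> [refl [anti trans]]; do !split; eauto. Qed.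

Lemma dual_finite_length : finite_length A le -> finite_length A ge.
Proof.
move=> fin C [CA Ccmp]; apply: fin; split=> // x y Cx Cy.
by case: (Ccmp x y Cx Cy); auto.
Qed.

Lemma dual_lattice : is_lattice A le -> is_lattice A ge.
Proof.
move=> [po lat]; split=> [|a b Aa Ab]; first exact: dual_poset.
have [[j [? [? [? ?]]]] [m [? [? [? ?]]]]] := lat a b Aa Ab.
by split; [exists m | exists j]; do !split.
Qed.

Lemma lattice_top a : is_lattice A le -> finite_length A le -> A a ->
  exists t, A t /\ forall c, A c -> le c t.
Proof.
move=> lat fin; apply: (lattice_bottom (dual_poset (proj1 lat))) => //.
  exact: dual_finite_length.
exact: dual_lattice.
Qed.

End Duality.

Section CoverAbove.
Variables (T : Type) (A : T -> Prop) (le : T -> T -> Prop).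
Hypothesis poset : is_poset A le.
Hypothesis lt_wf : well_founded (rel_lt A le).

Lemma exists_cover_above a c : rel_lt A le a c -> exists d, covers A le a d /\ le d c.
Proof.
move=> ac; have [Aa Ac _ _] := ac.
have [d [[[_ Ad ad a_ne_d] dc] d_min]] :=
  exists_minimal (P := fun d => rel_lt A le a d /\ le d c) lt_wf (conj ac (rel_le_refl poset Ac)).
exists d; repeat split=> //; move=> z Az az zd.
have [->|z_ne_a] := classic (z = a); [by left | right].
apply: NNPP => z_ne_d; apply: (d_min z); last by split.
by split; [split=> // /esym | apply: (rel_le_trans poset Az Ad Ac zd dc)].
Qed.

End CoverAbove.

Lemma exists_cover_below (T : Type) (A : T -> Prop) (le : T -> T -> Prop) a c :
  is_poset A le -> well_founded (rel_lt A (fun a b => le b a)) ->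
  rel_lt A le a c -> exists d, covers A le d c /\ le a d.
Proof.
move=> poset gt_wf [Aa Ac ac a_ne_c].
have [d [[Ac' [Ad [cd [c_ne_d d_btw]]]] ad]] :=
  exists_cover_above (dual_poset poset) gt_wf (And4 Ac Aa ac (nesym a_ne_c)).
exists d; repeat split=> //; first exact: nesym.
by move=> z Az dz zc; case: (d_btw z Az zc dz); [right | left].
Qed.

(** * Covers and Boolean cubes in semimodular posets *)

Section WellFoundedPoset.
Variables (T : Type) (A : T -> Prop) (le : T -> T -> Prop).
Hypothesis poset : is_poset A le.
Hypothesis lt_wf : well_founded (rel_lt A le).
Hypothesis gt_wf : well_founded (rel_lt A (fun a b => le b a)).
Hypothesis joins : forall a b, A a -> A b -> exists j, is_lub A le j a b.
Hypothesis semimod : semimodular A le.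

Definition is_lub_seq (I : eqType) (j x0 : T) (f : I -> T) (s : seq I) :=
  [/\ A j, le x0 j, forall i, i \in s -> le (f i) j &
      forall z, A z -> le x0 z -> (forall i, i \in s -> le (f i) z) -> le j z].

Lemma lub_seq_exists (I : eqType) x0 (f : I -> T) (s : seq I) :
  A x0 -> (forall i, A (f i)) -> exists j, is_lub_seq j x0 f s.
Proof.
move=> Ax0 Af; elim: s => [|i s [j0 [Aj0 x0j0 fj0 j0_least]]].
  by exists x0; split=> //; exact: (rel_le_refl poset Ax0).
have [j [Aj [j0j [fij j_least]]]] := joins Aj0 (Af i).
exists j; split=> // [|k|z Az x0z fz].
- exact: (rel_le_trans poset Ax0 Aj0 Aj x0j0 j0j).
- rewrite in_cons => /predU1P [-> //|ks].
  exact: (rel_le_trans poset (Af k) Aj0 Aj (fj0 k ks) j0j).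
- apply: j_least => //; last by apply: fz; rewrite mem_head.
  by apply: j0_least => // k ks; apply: fz; rewrite in_cons ks orbT.
Qed.

Lemma lub_absorb c d b j1 j : A c -> A d -> A b -> le d c ->
  is_lub A le j1 d b -> is_lub A le j c j1 -> is_lub A le j c b.
Proof.
move=> Ac Ad Ab dc [Aj1 [dj1 [bj1 j1_least]]] [Aj [cj [j1j j_least]]].
repeat split=> //; first exact: (rel_le_trans poset Ab Aj1 Aj bj1 j1j).
move=> z Az cz bz; apply: j_least => //; apply: j1_least => //.
exact: (rel_le_trans poset Ad Ac Az dc cz).
Qed.

Lemma upper_covering a b c j :
  covers A le a b -> A c -> le a c -> is_lub A le j c b -> j = c \/ covers A le c j.
Proof.
elim/(well_founded_ind gt_wf): a b c j => a IH b c j ab Ac ac cbj.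
have [Aa [Ab [a_b [a_ne_b _]]]] := ab.
have [Aj [cj [bj j_least]]] := cbj.
have [bc|nbc] := classic (le b c).
  left; apply: (rel_le_anti poset Aj Ac _ cj).
  exact: j_least Ac (rel_le_refl poset Ac) bc.
have [ca|c_ne_a] := classic (c = a).
  right; subst c; suff -> : j = b by [].
  exact: (rel_le_anti poset Aj Ab (j_least b Ab a_b (rel_le_refl poset Ab)) bj).
have [d [ad dc]] := exists_cover_above poset lt_wf (And4 Aa Ac ac (nesym c_ne_a)).
have [_ [Ad [a_d [a_ne_d _]]]] := ad.
have d_ne_b : d <> b by move=> db; apply: nbc; rewrite -db.
have [j1 dbj1] := joins Ad Ab.
have [dj1 _] := semimod d_ne_b ad ab dbj1.
have [j' cj1j'] := joins Ac (proj1 dbj1).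
suff -> : j = j' by apply: (IH d _ j1 c j' dj1 Ac dc cj1j'); split=> //; apply: nesym.
exact: (lub_unique poset cbj (lub_absorb Ac Ad Ab dc dbj1 cj1j')).
Qed.

Lemma cover_witness p a y : A p -> A a -> A y -> le p a -> le p y -> ~ le a y ->
  exists s s', [/\ covers A le s' s, le p s', le s' y, le s a & ~ le s y].
Proof.
move=> Ap Aa Ay pa py nay.
have [s [[As ps sa nsy] s_min]] :=
  exists_minimal (P := fun s => [/\ A s, le p s, le s a & ~ le s y]) lt_wf
    (And4 Aa pa (rel_le_refl poset Aa) nay).
have p_ne_s : p <> s by move=> ps_eq; apply: nsy; rewrite -ps_eq.
have [s' [s's ps']] := exists_cover_below poset gt_wf (And4 Ap As ps p_ne_s).
have [As' [_ [s's_le [s'_ne_s _]]]] := s's.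
exists s, s'; split=> //; apply: NNPP => ns'y; apply: (s_min s'); last by split.
by split=> //; apply: (rel_le_trans poset As' As Aa s's_le sa).
Qed.

Lemma boolean_cube_covers m (phi : {set 'I_m} -> T) :
  (forall X, A (phi X)) -> (forall X Z, le (phi X) (phi Z) <-> X \subset Z) ->
  exists u (c Y : 'I_m -> T), [/\ A u, forall k, covers A le u (c k),
    forall k, A (Y k) /\ le u (Y k), forall i k, i != k -> le (c i) (Y k) &
    forall k, ~ le (c k) (Y k)].
Proof.
(* [Y k] is the image of the coatom missing [k]; [s' k] is covered by [s k], which lies
   below [phi [set k]] but not below [Y k], and [c k] joins [s k] with [u], the join of
   all the [s' k]. *)
move=> Aphi phi_emb; pose Y k := phi (setT :\ k).
have pY k : le (phi set0) (Y k) by apply/phi_emb/sub0set.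
have iY i k : i != k -> le (phi [set i]) (Y k).
  by move=> ik; apply/phi_emb; rewrite sub1set !inE ik.
have nkY k : ~ le (phi [set k]) (Y k) by move/phi_emb; rewrite sub1set !inE eqxx.
have [s sP] := choice (fun k s => exists s', [/\ covers A le s' s, le (phi set0) s', le s' (Y k),
    le s (phi [set k]) & ~ le s (Y k)]) (fun k => cover_witness (Aphi set0) (Aphi [set k]) (Aphi _)
      (proj2 (phi_emb _ _) (sub0set _)) (pY k) (nkY k)).
have [s' s'P] := choice _ sP.
have As k : A (s k) by case: (s'P k) => [[_ []]].
have As' k : A (s' k) by case: (s'P k) => [[]].
have s'_le_s k : le (s' k) (s k) by case: (s'P k) => [[_ [_ []]]].
have sY i k : i != k -> le (s i) (Y k).
  move=> ik; have [_ _ _ siphi _] := s'P i.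
  exact: (rel_le_trans poset (As i) (Aphi _) (Aphi _) siphi (iY i k ik)).
have [u [Au pu s'u u_least]] := lub_seq_exists (enum 'I_m) (Aphi set0) As'.
have uY k : le u (Y k).
  apply: u_least => [|//|i _]; first exact: Aphi.
  have [->|ik] := eqVneq i k; first by case: (s'P k).
  exact: (rel_le_trans poset (As' i) (As i) (Aphi _) (s'_le_s i) (sY i k ik)).
have [c cP] := choice (fun k c => is_lub A le c u (s k)) (fun k => joins Au (As k)).
have scY k : ~ le (c k) (Y k).
  move=> ckY; have [_ _ _ _ nsY] := s'P k; apply: nsY.
  have [Ack [_ [skc _]]] := cP k.
  exact: (rel_le_trans poset (As k) Ack (Aphi _) skc ckY).
exists u, c, Y; split=> // [k|k|i k ik].
- have [s's _ _ _ _] := s'P k.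
  have [cu|//] := upper_covering s's Au (s'u k (mem_enum _ k)) (cP k).
  by case: (scY k); rewrite cu.
- by split; [apply: Aphi | apply: uY].
- have [_ [_ [_ c_least]]] := cP i.
  by apply: c_least; [apply: Aphi | apply: uY | apply: sY].
Qed.

Lemma lub_seq_boolean_embedding m u (c Y : 'I_m -> T) : A u -> (forall k, A (c k)) ->
  (forall k, A (Y k) /\ le u (Y k)) -> (forall i k, i != k -> le (c i) (Y k)) ->
  (forall k, ~ le (c k) (Y k)) ->
  exists psi : {set 'I_m} -> T, (forall X, is_lub_seq (psi X) u c (enum X)) /\
    forall X Z, le (psi X) (psi Z) <-> X \subset Z.
Proof.
move=> Au Ac uY cY ncY.
have [psi psiP] : exists psi : {set 'I_m} -> T, forall X, is_lub_seq (psi X) u c (enum X).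
  apply: (choice (fun (X : {set 'I_m}) j => is_lub_seq j u c (enum X))) => X.
  exact: lub_seq_exists.
exists psi; split=> // X Z; split=> [psiXZ|/subsetP XZ].
- apply/subsetP => k kX; apply: NNPP => kZ; apply: (ncY k).
  have [AX _ cX _] := psiP X; have [AZ _ _ Z_least] := psiP Z.
  have [AYk uYk] := uY k.
  have psiZY : le (psi Z) (Y k).
    apply: Z_least => // i; rewrite mem_enum => iZ; apply: cY.
    by apply/eqP => ik; apply: kZ; rewrite -ik.
  apply: (rel_le_trans poset (Ac k) AZ AYk _ psiZY).
  by apply: (rel_le_trans poset (Ac k) AX AZ _ psiXZ); apply: cX; rewrite mem_enum.
- have [_ _ _ X_least] := psiP X; have [AZ uZ cZ _] := psiP Z.
  by apply: X_least => // i; rewrite mem_enum => /XZ iZ; apply: cZ; rewrite mem_enum.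
Qed.

End WellFoundedPoset.

Section FiniteLengthLattice.
Variables (d : Order.disp_t) (S : latticeType d).
Local Notation covS := (covers (fun _ : S => True) (fun x y : S => (x <= y)%O)).

Lemma order_poset : is_poset (fun _ : S => True) (fun x y : S => (x <= y)%O).
Proof.
split=> [x _|]; first exact: le_refl.
by split=> [x y _ _ xy yx|x y z _ _ _]; [apply/le_anti/andP | apply: le_trans].
Qed.

Lemma order_lt_neq (x y : S) : (x <= y)%O -> x <> y -> (x < y)%O.
Proof. by move=> xy x_ne_y; rewrite lt_neqAle xy andbT; apply/eqP. Qed.

Lemma cover_lt (x y : S) : covS x y -> (x < y)%O.
Proof. by move=> [_ [_ [xy [x_ne_y _]]]]; apply: order_lt_neq. Qed.

Hypothesis S_finite : finite_length (fun _ : S => True) (fun x y : S => (x <= y)%O).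

Lemma order_lt_wf : well_founded (fun x y : S => (x < y)%O).
Proof.
apply: (wf_incl _ _ _ _ (rel_lt_wf order_poset S_finite)) => x y.
by rewrite lt_neqAle => /andP [/eqP x_ne_y xy].
Qed.

Lemma order_gt_wf : well_founded (fun x y : S => (y < x)%O).
Proof.
apply: (wf_incl _ _ _ _
  (rel_lt_wf (dual_poset order_poset) (dual_finite_length S_finite))) => x y.
by rewrite lt_neqAle => /andP [/eqP y_ne_x yx]; split=> // /esym.
Qed.

Lemma lt_exists_cover (x y : S) : (x < y)%O -> exists x1, covS x x1 /\ (x1 <= y)%O.
Proof.
move=> xy_lt; apply: (exists_cover_above order_poset).
  by apply: (wf_incl _ _ _ _ order_lt_wf) => u v [_ _ uv u_ne_v]; apply: order_lt_neq.
by move: xy_lt; rewrite lt_neqAle => /andP [/eqP x_ne_y xy].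
Qed.

End FiniteLengthLattice.

(** * Glued sums *)

Section GluedSum.
Variables (d : Order.disp_t) (S : latticeType d) (U : Type)
  (L : S -> U -> Prop) (le : S -> U -> U -> Prop).
Hypothesis S_finite : finite_length (fun _ : S => True) (fun x y : S => (x <= y)%O).
Hypothesis blocks : forall x, is_lattice (L x) (le x) /\ finite_length (L x) (le x).
Hypothesis overlap_filter_ideal : forall x y : S, (x <= y)%O -> (exists a, L x a /\ L y a) ->
  is_filter (L x) (le x) (fun a => L x a /\ L y a) /\
  is_ideal (L y) (le y) (fun a => L x a /\ L y a).
Hypothesis overlap_order_agree : forall x y : S, (x <= y)%O -> (exists a, L x a /\ L y a) ->
  forall a b, L x a -> L y a -> L x b -> L y b -> (le x a b <-> le y a b).
Hypothesis cover_overlap : forall x y : S,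
  covers (fun _ : S => True) (fun u v : S => (u <= v)%O) x y -> exists a, L x a /\ L y a.
Hypothesis overlap_meet_join : forall (x y : S) a,
  L x a -> L y a -> L (x `&` y)%O a /\ L (x `|` y)%O a.

Local Notation gle := (glued_le L le).
Local Notation gcar := (glued_carrier L).
Local Notation gstep := (fun a b => exists x, L x a /\ L x b /\ le x a b).

Lemma block_poset x : is_poset (L x) (le x).
Proof. exact: (proj1 (proj1 (blocks x))). Qed.

Lemma block_lub_exists x a b : L x a -> L x b -> exists j, is_lub (L x) (le x) j a b.
Proof. by move=> La Lb; case: (proj2 (proj1 (blocks x)) a b La Lb). Qed.

Lemma block_up_closed (x y : S) a b :
  (x <= y)%O -> L x a -> L y a -> L x b -> le x a b -> L y b.
Proof.
move=> xy Lxa Lya Lxb ab.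
have [[_ [_ [up _]]] _] := overlap_filter_ideal xy (ex_intro _ a (conj Lxa Lya)).
exact: (proj2 (up a b (conj Lxa Lya) Lxb ab)).
Qed.

Lemma block_down_closed (x y : S) a b :
  (x <= y)%O -> L x a -> L y a -> L y b -> le y b a -> L x b.
Proof.
move=> xy Lxa Lya Lyb ba.
have [_ [_ [_ [down _]]]] := overlap_filter_ideal xy (ex_intro _ a (conj Lxa Lya)).
exact: (proj1 (down a b (conj Lxa Lya) Lyb ba)).
Qed.

Lemma overlap_lub_closed (x y : S) a b j : (x <= y)%O -> L x a -> L y a -> L x b -> L y b ->
  is_lub (L y) (le y) j a b -> L x j.
Proof.
move=> xy Lxa Lya Lxb Lyb abj.
have [_ [_ [_ [_ join]]]] := overlap_filter_ideal xy (ex_intro _ a (conj Lxa Lya)).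
exact: (proj1 (join a b j (conj Lxa Lya) (conj Lxb Lyb) abj)).
Qed.

(* Both blocks agree with the block of [x `&` y], which contains [a] and [b]. *)
Lemma block_le_transfer (x y : S) a b :
  L x a -> L x b -> L y a -> L y b -> le x a b -> le y a b.
Proof.
move=> Lxa Lxb Lya Lyb ab.
have [Ma _] := overlap_meet_join Lxa Lya; have [Mb _] := overlap_meet_join Lxb Lyb.
have agree_x := overlap_order_agree (leIl x y) (ex_intro _ a (conj Ma Lxa)) Ma Lxa Mb Lxb.
have agree_y := overlap_order_agree (leIr y x) (ex_intro _ a (conj Ma Lya)) Ma Lya Mb Lyb.
exact: (proj1 agree_y (proj2 agree_x ab)).
Qed.

Lemma overlap_is_lub (w v : S) a b j : (w <= v)%O -> L w a -> L v a -> L w b -> L v b ->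
  is_lub (L v) (le v) j a b -> is_lub (L w) (le w) j a b.
Proof.
move=> wv Lwa Lva Lwb Lvb abj; have Lwj := overlap_lub_closed wv Lwa Lva Lwb Lvb abj.
have [Lvj [aj [bj j_least]]] := abj.
have to_w c : L w c -> L v c -> le v c j -> le w c j.
  by move=> Lwc Lvc; apply: (block_le_transfer Lvc Lvj Lwc Lwj).
split=> //; split; first exact: (to_w a Lwa Lva aj).
split=> [|z Lwz az bz]; first exact: (to_w b Lwb Lvb bj).
have Lvz := block_up_closed wv Lwa Lva Lwz az.
apply: (block_le_transfer Lvj Lvz Lwj Lwz); apply: j_least => //.
- exact: (block_le_transfer Lwa Lwz Lva Lvz az).
- exact: (block_le_transfer Lwb Lwz Lvb Lvz bz).
Qed.

Lemma block_convex (u z v : S) a :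
  (u <= z)%O -> (z <= v)%O -> L u a -> L v a -> L z a.
Proof.
elim/(well_founded_ind (order_gt_wf S_finite)): u => u IH uz zv Lua Lva.
have [<- //|u_ne_z] := eqVneq u z.
have [u1 [uu1 u1z]] := lt_exists_cover S_finite (order_lt_neq uz (elimN eqP u_ne_z)).
have [b [Lub Lu1b]] := cover_overlap uu1.
have [c [Luc [ac [bc _]]]] := block_lub_exists Lua Lub.
have uv : (u <= v)%O := le_trans uz zv.
have Lu1c := block_up_closed (ltW (cover_lt uu1)) Lub Lu1b Luc bc.
have Lvc := block_up_closed uv Lua Lva Luc ac.
have Lu1a := block_down_closed (le_trans u1z zv) Lu1c Lvc Lva
  (block_le_transfer Lua Luc Lva Lvc ac).
exact: IH (cover_lt uu1) u1z zv Lu1a Lva.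
Qed.

Lemma gle_block_above a b y : gle a b -> L y a -> exists v, (y <= v)%O /\ L v b.
Proof.
rewrite /glued_le => ab; elim: ab y => {a b} [a b [x [Lxa [Lxb ab]]]|a m b _ IH1 _ IH2] y Lya.
  exists (x `|` y)%O; split; first exact: leUr.
  exact: block_up_closed (leUl x y) Lxa (overlap_meet_join Lxa Lya).2 Lxb ab.
have [v1 [yv1 Lv1m]] := IH1 y Lya; have [v2 [v1v2 Lv2b]] := IH2 v1 Lv1m.
by exists v2; split=> //; apply: le_trans yv1 v1v2.
Qed.

Lemma gle_block_below a b y : gle a b -> L y b -> exists u, (u <= y)%O /\ L u a.
Proof.
rewrite /glued_le => ab; elim: ab y => {a b} [a b [x [Lxa [Lxb ab]]]|a m b _ IH1 _ IH2] y Lyb.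
  exists (x `&` y)%O; split; first exact: leIr.
  exact: block_down_closed (leIl x y) (overlap_meet_join Lxb Lyb).1 Lxb Lxa ab.
have [u1 [u1y Lu1m]] := IH2 y Lyb; have [u2 [u2u1 Lu2a]] := IH1 u1 Lu1m.
by exists u2; split=> //; apply: le_trans u2u1 u1y.
Qed.

Lemma block_interval_closed z p q t : L z p -> L z q -> gle p t -> gle t q -> L z t.
Proof.
move=> Lzp Lzq pt tq.
have [v [zv Lvt]] := gle_block_above pt Lzp; have [u [uz Lut]] := gle_block_below tq Lzq.
exact: block_convex uz zv Lut Lvt.
Qed.

Lemma gle_carrier_l a b : gle a b -> gcar a.
Proof. by rewrite /glued_le; elim=> // {}a {}b [x [Lxa _]]; exists x. Qed.

Lemma gle_carrier_r a b : gle a b -> gcar b.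
Proof. by rewrite /glued_le; elim=> // {}a {}b [x [_ [Lxb _]]]; exists x. Qed.

Lemma block_le_gle z a b : L z a -> L z b -> le z a b -> gle a b.
Proof. by move=> Lza Lzb ab; apply: t_step; exists z. Qed.

Lemma gle_block_le z a b : gle a b -> L z a -> L z b -> le z a b.
Proof.
rewrite /glued_le => ab.
elim: ab => {a b} [a b [x [Lxa [Lxb ab]]]|a m b am IH1 mb IH2] Lza Lzb.
  exact: block_le_transfer Lxa Lxb Lza Lzb ab.
have Lzm := block_interval_closed Lza Lzb am mb.
exact: (rel_le_trans (block_poset z) Lza Lzm Lzb (IH1 Lza Lzm) (IH2 Lzm Lzb)).
Qed.

Lemma gle_refl a : gcar a -> gle a a.
Proof. by move=> [x Lxa]; apply: (block_le_gle Lxa Lxa (rel_le_refl (block_poset x) Lxa)). Qed.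

Lemma gle_trans a b c : gle a b -> gle b c -> gle a c.
Proof. exact: t_trans. Qed.

Lemma gle_anti a b : gle a b -> gle b a -> a = b.
Proof.
move=> ab ba; have [z Lza] := gle_carrier_l ab.
have Lzb := block_interval_closed Lza Lza ab ba.
exact: (rel_le_anti (block_poset z) Lza Lzb (gle_block_le ab Lza Lzb) (gle_block_le ba Lzb Lza)).
Qed.

Lemma gle_poset : is_poset gcar gle.
Proof.
split; first exact: gle_refl.
by split=> [a b _ _|a b c _ _ _]; [apply: gle_anti | apply: gle_trans].
Qed.

Definition is_block_bottom x b := L x b /\ forall c, L x c -> le x b c.

Lemma block_bottom_exists x a : L x a -> exists b, is_block_bottom x b.
Proof. exact: (lattice_bottom (block_poset x) (proj2 (blocks x)) (proj1 (blocks x))). Qed.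

Lemma block_top_exists x a : L x a -> exists t, L x t /\ forall c, L x c -> le x c t.
Proof. exact: (lattice_top (proj1 (blocks x)) (proj2 (blocks x))). Qed.

Lemma gle_block_bottoms (x y : S) b0 b1 :
  (x <= y)%O -> is_block_bottom x b0 -> is_block_bottom y b1 -> gle b0 b1.
Proof.
elim/(well_founded_ind (order_gt_wf S_finite)): x b0 => x IH b0 xy [Lb0 b0_min] y_b1.
have [xy_eq|x_ne_y] := eqVneq x y.
  by subst y; have [Lb1 _] := y_b1; apply: (block_le_gle Lb0 Lb1 (b0_min b1 Lb1)).
have [x1 [xx1 x1y]] := lt_exists_cover S_finite (order_lt_neq xy (elimN eqP x_ne_y)).
have [c [Lxc Lx1c]] := cover_overlap xx1.
have [b2 [Lx1b2 b2_min]] := block_bottom_exists Lx1c.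
have Lxb2 := block_down_closed (ltW (cover_lt xx1)) Lxc Lx1c Lx1b2 (b2_min c Lx1c).
apply: gle_trans (block_le_gle Lb0 Lxb2 (b0_min b2 Lxb2)) _.
exact: IH (cover_lt xx1) b2 x1y (conj Lx1b2 b2_min) y_b1.
Qed.

Definition overlap_above (w y : S) := (w <= y)%O /\ exists c, L w c /\ L y c.

Lemma overlap_above_join w y1 y2 :
  overlap_above w y1 -> overlap_above w y2 -> overlap_above w (y1 `|` y2)%O.
Proof.
move=> [wy1 [c1 [Lwc1 Ly1c1]]] [wy2 [c2 [Lwc2 Ly2c2]]].
split; first exact: le_trans wy1 (leUl y1 y2).
have [c [Lwc [c1c [c2c _]]]] := block_lub_exists Lwc1 Lwc2.
exists c; split=> //; apply: (proj2 (overlap_meet_join _ _)).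
- exact: block_up_closed wy1 Lwc1 Ly1c1 Lwc c1c.
- exact: block_up_closed wy2 Lwc2 Ly2c2 Lwc c2c.
Qed.

Lemma overlap_above_max w a c : (w <= a)%O -> L w c -> exists a',
  [/\ overlap_above w a', (a' <= a)%O & forall v, overlap_above w v -> (v <= a)%O -> (v <= a')%O].
Proof.
move=> wa Lwc.
have [m [[wm ma] m_max]] := exists_minimal (P := fun v => overlap_above w v /\ (v <= a)%O)
  (order_gt_wf S_finite) (conj (conj (le_refl w) (ex_intro _ c (conj Lwc Lwc))) wa).
exists m; split=> // v wv va.
have [<-|m_ne_vm] := eqVneq (v `|` m)%O m; first exact: leUl.
case: (m_max (v `|` m)%O); first by split; [apply: overlap_above_join | rewrite leUx va].
by rewrite lt_def m_ne_vm leUr.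
Qed.

Lemma gle_rt1n a b : gle a b -> clos_refl_trans_1n U gstep a b.
Proof. by move=> ab; apply/clos_rt_rt1n/clos_t_clos_rt. Qed.

Lemma gle_of_rt1n a b : gcar b -> clos_refl_trans_1n U gstep a b -> gle a b.
Proof.
move=> Cb ab; elim: ab Cb => [x|x y z xy _ IH] Cz; first exact: gle_refl.
exact: gle_trans (t_step _ _ _ _ xy) (IH Cz).
Qed.

Lemma step_between (w a x u : S) t y : (w <= a)%O -> (u <= a)%O ->
  L w t -> L x t -> L x y -> le x t y -> L u y ->
  exists v, [/\ (w <= v)%O, (v <= a)%O, L v t, L v y & le v t y].
Proof.
move=> wa ua Lwt Lxt Lxy ty Luy.
have Lxw_t := (overlap_meet_join Lxt Lwt).2.
have Lxw_y := block_up_closed (leUl x w) Lxt Lxw_t Lxy ty.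
have wv : (w <= (x `|` w) `&` a)%O by rewrite lexI leUr wa.
have vxw : ((x `|` w) `&` a <= x `|` w)%O := leIl _ _.
have Lvt := block_convex wv vxw Lwt Lxw_t.
have xwu_v : ((x `|` w) `&` u <= (x `|` w) `&` a)%O.
  by rewrite lexI leIl (le_trans (leIr u (x `|` w)%O) ua).
have Lvy := block_convex xwu_v vxw (overlap_meet_join Lxw_y Luy).1 Lxw_y.
exists ((x `|` w) `&` a)%O; split=> //; first exact: leIr.
exact: block_le_transfer Lxt Lxy Lvt Lvy ty.
Qed.

Definition block_lub_below (w : S) q := forall r1 r2 j, L w r1 -> L w r2 ->
  is_lub (L w) (le w) j r1 r2 -> gle r1 q -> gle r2 q -> gle j q.

(* In the induction of [block_lub_below_all], [a'] is the largest element below [a]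
   whose block overlaps [L w], and [b] is the bottom of [L a'], which lies in [L w]. *)
Section LubWithBottom.
Variables (a w a' : S) (q b : U).
Hypotheses (Laq : L a q) (wa : (w <= a)%O) (La'b : L a' b) (Lwb : L w b) (bq : gle b q).
Hypothesis a'_max : forall v, overlap_above w v -> (v <= a)%O -> (v <= a')%O.
Hypothesis lub_below_above : forall v, (w < v)%O -> (v <= a)%O -> block_lub_below v q.

(* Induction on a chain of block steps from [t] to [q]: each step is moved into a
   block [v] between [w] and [a'], which therefore contains [b] as well. *)
Lemma lub_with_bottom_below t : L w t -> gle t q ->
  forall l, is_lub (L w) (le w) l t b -> gle l q.
Proof.
move=> Lwt /gle_rt1n tq; move: t tq Lwt; apply: rt1n_ind_right => [|t y ty yq IH] Lwt l tbl.
  have [Ll [_ [_ l_least]]] := tbl; apply: (block_le_gle Ll Lwt); apply: l_least => //.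
    exact: (rel_le_refl (block_poset w) Lwt).
  exact: gle_block_le bq Lwb Lwt.
have yq' : gle y q := gle_of_rt1n (ex_intro _ a Laq) yq.
have [x [Lxt [Lxy txy]]] := ty.
have [u [ua Luy]] := gle_block_below yq' Laq.
have [v [wv va Lvt Lvy tvy]] := step_between wa ua Lwt Lxt Lxy txy Luy.
have Lvb := block_convex wv (a'_max (conj wv (ex_intro _ t (conj Lwt Lvt))) va) Lwb La'b.
have [ly yby] := block_lub_exists Lvy Lvb.
have lyq : gle ly q.
  have [vw|v_ne_w] := eqVneq v w; first by subst v; apply: IH.
  by apply: (lub_below_above _ va Lvy Lvb yby yq' bq); rewrite lt_def v_ne_w.
have [lt tbt] := block_lub_exists Lvt Lvb.
rewrite (lub_unique (block_poset w) tbl (overlap_is_lub wv Lwt Lvt Lwb Lvb tbt)).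
have [Llt [_ [_ lt_least]]] := tbt; have [Lly [yly [bly _]]] := yby.
apply: gle_trans lyq; apply: (block_le_gle Llt Lly); apply: (lt_least _ Lly _ bly).
exact: (rel_le_trans (block_poset v) Lvt Lvy Lly tvy yly).
Qed.

End LubWithBottom.

Lemma block_lub_below_all (a : S) q : L a q -> forall w, (w <= a)%O -> block_lub_below w q.
Proof.
move=> Laq w; elim/(well_founded_ind (order_gt_wf S_finite)): w.
move=> w IH wa r1 r2 j Lr1 Lr2 r12j r1q r2q.
have [wa_eq|w_ne_a] := eqVneq w a.
  subst w; have [Lj [_ [_ j_least]]] := r12j; apply: (block_le_gle Lj Laq).
  by apply: j_least => //; apply: gle_block_le.
have [a' [[wa' [c [Lwc La'c]]] a'a a'_max]] := overlap_above_max wa Lr1.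
have wa'_lt : (w < a')%O.
  have [w1 [ww1 w1a]] := lt_exists_cover S_finite (order_lt_neq wa (elimN eqP w_ne_a)).
  have w1a' := a'_max w1 (conj (ltW (cover_lt ww1)) (cover_overlap ww1)) w1a.
  exact: lt_le_trans (cover_lt ww1) w1a'.
have [b [La'b b_min]] := block_bottom_exists La'c.
have Lwb := block_down_closed wa' Lwc La'c La'b (b_min c La'c).
have bq : gle b q.
  have [ba [Laba ba_min]] := block_bottom_exists Laq.
  apply: gle_trans (gle_block_bottoms a'a (conj La'b b_min) (conj Laba ba_min)) _.
  exact: (block_le_gle Laba Laq (ba_min q Laq)).
have lub_below_above v : (w < v)%O -> (v <= a)%O -> block_lub_below v q by apply: IH.
have [l1 r1bl1] := block_lub_exists Lr1 Lwb; have [l2 r2bl2] := block_lub_exists Lr2 Lwb.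
have l1q := lub_with_bottom_below Laq wa La'b Lwb bq a'_max lub_below_above Lr1 r1q r1bl1.
have l2q := lub_with_bottom_below Laq wa La'b Lwb bq a'_max lub_below_above Lr2 r2q r2bl2.
have [Ll1 [r1l1 [bl1 _]]] := r1bl1; have [Ll2 [r2l2 [bl2 _]]] := r2bl2.
have La'l1 := block_up_closed wa' Lwb La'b Ll1 bl1.
have La'l2 := block_up_closed wa' Lwb La'b Ll2 bl2.
have [J l12J] := block_lub_exists La'l1 La'l2.
have Jq := IH a' wa'_lt a'a l1 l2 J La'l1 La'l2 l12J l1q l2q.
have [LwJ [l1J [l2J _]]] := overlap_is_lub wa' Ll1 La'l1 Ll2 La'l2 l12J.
have [_ [_ [_ j_least]]] := r12j.
apply: gle_trans Jq; apply: (block_le_gle (proj1 r12j) LwJ); apply: j_least => //.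
- exact: (rel_le_trans (block_poset w) Lr1 Ll1 LwJ r1l1 l1J).
- exact: (rel_le_trans (block_poset w) Lr2 Ll2 LwJ r2l2 l2J).
Qed.

Lemma block_lub_gle w q : block_lub_below w q.
Proof.
move=> r1 r2 j Lr1 Lr2 r12j r1q r2q; have [a Laq] := gle_carrier_r r1q.
have Lwa r : L w r -> gle r q -> L (w `&` a)%O r.
  move=> Lr rq; have [u [ua Lur]] := gle_block_below rq Laq.
  have wu_wa : (w `&` u <= w `&` a)%O by rewrite lexI leIl (le_trans (leIr u w) ua).
  exact: block_convex wu_wa (leIl w a) (overlap_meet_join Lr Lur).1 Lr.
have Lr1' := Lwa r1 Lr1 r1q; have Lr2' := Lwa r2 Lr2 r2q.
have r12j' := overlap_is_lub (leIl w a) Lr1' Lr1 Lr2' Lr2 r12j.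
exact: (block_lub_below_all Laq (leIr a w) Lr1' Lr2' r12j' r1q r2q).
Qed.

Lemma gle_lub_with_bottom (z x : S) r : (x <= z)%O -> L x r ->
  exists l b, [/\ is_block_bottom z b, L z l & is_lub gcar gle l r b].
Proof.
elim/(well_founded_ind (order_gt_wf S_finite)): x r => x IH r xz Lxr.
have [xz_eq|x_ne_z] := eqVneq x z.
  subst x; have [b [Lzb b_min]] := block_bottom_exists Lxr.
  exists r, b; split=> //; split; first by exists z.
  split; first exact: (gle_refl (ex_intro _ z Lxr)).
  by split=> [|q _ rq _ //]; apply: (block_le_gle Lzb Lxr (b_min r Lxr)).
have [x1 [xx1 x1z]] := lt_exists_cover S_finite (order_lt_neq xz (elimN eqP x_ne_z)).
have [c [Lxc Lx1c]] := cover_overlap xx1.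
have [b1 [Lx1b1 b1_min]] := block_bottom_exists Lx1c.
have Lxb1 := block_down_closed (ltW (cover_lt xx1)) Lxc Lx1c Lx1b1 (b1_min c Lx1c).
have [r1 rb1r1] := block_lub_exists Lxr Lxb1.
have [Lxr1 [rr1 [b1r1 _]]] := rb1r1.
have Lx1r1 := block_up_closed (ltW (cover_lt xx1)) Lxb1 Lx1b1 Lxr1 b1r1.
have [l [b [zb Lzl [Cl [r1l [bl l_least]]]]]] := IH x1 (cover_lt xx1) r1 x1z Lx1r1.
exists l, b; split=> //; split=> //; split.
  exact: gle_trans (block_le_gle Lxr Lxr1 rr1) r1l.
split=> // q Cq rq bq; apply: l_least => //.
apply: (block_lub_gle Lxr Lxb1 rb1r1 rq).
exact: gle_trans (gle_block_bottoms x1z (conj Lx1b1 b1_min) zb) bq.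
Qed.

Lemma gle_lub_exists a b : gcar a -> gcar b -> exists j, is_lub gcar gle j a b.
Proof.
move=> [x Lxa] [y Lyb].
have [la [ba [zba Lzla [_ [ala [_ la_least]]]]]] := gle_lub_with_bottom (leUl x y) Lxa.
have [lb [bb [zbb Lzlb [_ [blb [_ lb_least]]]]]] := gle_lub_with_bottom (leUr y x) Lyb.
have [j lablj] := block_lub_exists Lzla Lzlb.
have [Lzj [laj [lbj _]]] := lablj.
exists j; split; first by exists (x `|` y)%O.
split; first exact: gle_trans ala (block_le_gle Lzla Lzj laj).
split; first exact: gle_trans blb (block_le_gle Lzlb Lzj lbj).
move=> q _ aq bq.
have [v1 [xv1 Lv1q]] := gle_block_above aq Lxa.
have [v2 [yv2 Lv2q]] := gle_block_above bq Lyb.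
have Lvq := (overlap_meet_join Lv1q Lv2q).2.
have zv : (x `|` y <= v1 `|` v2)%O.
  by rewrite leUx (le_trans xv1 (leUl v1 v2)) (le_trans yv2 (leUr v2 v1)).
have [bv [Lbv bv_min]] := block_bottom_exists Lvq.
have bottom_q b0 : is_block_bottom (x `|` y)%O b0 -> gle b0 q.
  move=> zb0; apply: gle_trans (gle_block_bottoms zv zb0 (conj Lbv bv_min)) _.
  exact: (block_le_gle Lbv Lvq (bv_min q Lvq)).
apply: (block_lub_gle Lzla Lzlb lablj).
- by apply: la_least => //; [exists (v1 `|` v2)%O | apply: bottom_q].
- by apply: lb_least => //; [exists (v1 `|` v2)%O | apply: bottom_q].
Qed.

Lemma least_block u : gcar u -> exists x, L x u /\ forall y, L y u -> (x <= y)%O.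
Proof.
move=> [x0 Lx0u].
have [m [Lmu m_min]] := exists_minimal (P := fun x => L x u) (order_lt_wf S_finite) Lx0u.
exists m; split=> // y Lyu; have [mym|m_ne_my] := eqVneq (m `&` y)%O m.
  by rewrite -mym leIr.
by case: (m_min _ (overlap_meet_join Lmu Lyu).1); rewrite lt_neqAle m_ne_my leIl.
Qed.

Lemma greatest_block u : gcar u -> exists x, L x u /\ forall y, L y u -> (y <= x)%O.
Proof.
move=> [x0 Lx0u].
have [m [Lmu m_max]] := exists_minimal (P := fun x => L x u) (order_gt_wf S_finite) Lx0u.
exists m; split=> // y Lyu; have [mym|m_ne_my] := eqVneq (m `|` y)%O m.
  by rewrite -mym leUr.
by case: (m_max _ (overlap_meet_join Lmu Lyu).2); rewrite lt_def m_ne_my leUl.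
Qed.

Lemma gle_lt_wf : well_founded (rel_lt gcar gle).
Proof.
move=> b; have [Cb|NCb] := classic (gcar b); last by constructor=> a [_ /NCb].
have [x [Lxb x_min]] := least_block Cb; clear Cb.
elim/(well_founded_ind (order_lt_wf S_finite)): x b Lxb x_min => x IHx.
have block_wf := rel_lt_wf (block_poset x) (proj2 (blocks x)).
move=> b; elim/(well_founded_ind block_wf): b => b IHb Lxb x_min.
constructor=> a [Ca _ ab a_ne_b].
have [y [Lya y_min]] := least_block Ca.
have [u [ux Lua]] := gle_block_below ab Lxb.
have yx := le_trans (y_min u Lua) ux.
have [yx_eq|y_ne_x] := eqVneq y x.
  by subst y; apply: (IHb a _ Lya y_min); split=> //; apply: (gle_block_le ab Lya Lxb).
exact: IHx (order_lt_neq yx (elimN eqP y_ne_x)) a Lya y_min.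
Qed.

Lemma gle_gt_wf : well_founded (rel_lt gcar (fun a b => gle b a)).
Proof.
move=> b; have [Cb|NCb] := classic (gcar b); last by constructor=> a [_ /NCb].
have [x [Lxb x_max]] := greatest_block Cb; clear Cb.
elim/(well_founded_ind (order_gt_wf S_finite)): x b Lxb x_max => x IHx.
have block_wf := rel_lt_wf (dual_poset (block_poset x)) (dual_finite_length (proj2 (blocks x))).
move=> b; elim/(well_founded_ind block_wf): b => b IHb Lxb x_max.
constructor=> a [Ca _ ba a_ne_b].
have [y [Lya y_max]] := greatest_block Ca.
have [v [xv Lva]] := gle_block_above ba Lxb.
have xy := le_trans xv (y_max v Lva).
have [yx_eq|/eqP y_ne_x] := eqVneq y x.
  by subst y; apply: (IHb a _ Lya y_max); split=> //; apply: (gle_block_le ba Lxb Lya).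
exact: IHx (order_lt_neq xy (nesym y_ne_x)) a Lya y_max.
Qed.

Lemma gle_cover_step a b : covers gcar gle a b -> exists x, L x a /\ L x b /\ le x a b.
Proof.
move=> [Ca [Cb [ab [a_ne_b ab_btw]]]].
suff: forall t, clos_refl_trans_1n U gstep t b -> t = a -> exists x, L x a /\ L x b /\ le x a b.
  by apply; first exact: (gle_rt1n ab).
apply: rt1n_ind_right => [ba|t y ty yb IH ta]; first by case: (a_ne_b (esym ba)).
subst t; have Cy : gcar y by have [x [_ [Lxy _]]] := ty; exists x.
have [ya|yb_eq] := ab_btw y Cy (t_step _ _ _ _ ty) (gle_of_rt1n Cb yb); first exact: IH.
by rewrite -yb_eq.
Qed.

Lemma gle_cover_block z p q : covers gcar gle p q -> L z p -> L z q -> covers (L z) (le z) p q.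
Proof.
move=> [_ [_ [pq [p_ne_q pq_btw]]]] Lzp Lzq.
split=> //; split=> //; split; first exact: gle_block_le pq Lzp Lzq.
split=> // t Lzt pt tq; apply: pq_btw; first by exists z.
- exact: (block_le_gle Lzp Lzt pt).
- exact: (block_le_gle Lzt Lzq tq).
Qed.

Lemma block_cover_gle z p q : covers (L z) (le z) p q -> covers gcar gle p q.
Proof.
move=> [Lzp [Lzq [pq [p_ne_q pq_btw]]]].
split; first by exists z. split; first by exists z.
split; first exact: (block_le_gle Lzp Lzq pq).
split=> // t _ pt tq; have Lzt := block_interval_closed Lzp Lzq pt tq.
exact: pq_btw Lzt (gle_block_le pt Lzp Lzt) (gle_block_le tq Lzt Lzq).
Qed.

Lemma gle_semimodular : (forall x, semimodular (L x) (le x)) -> semimodular gcar gle.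
Proof.
move=> block_sm a b c b_ne_c ab ac j bcj.
have [x [Lxa [Lxb xab]]] := gle_cover_step ab.
have [y [Lya [Lyc yac]]] := gle_cover_step ac.
have Lza := (overlap_meet_join Lxa Lya).2.
have Lzb := block_up_closed (leUl x y) Lxa Lza Lxb xab.
have Lzc := block_up_closed (leUr y x) Lya Lza Lyc yac.
have [jz bcjz] := block_lub_exists Lzb Lzc.
have [bjz cjz] := block_sm _ a b c b_ne_c (gle_cover_block ab Lza Lzb)
  (gle_cover_block ac Lza Lzc) jz bcjz.
suff <- : jz = j by split; [apply: block_cover_gle bjz | apply: block_cover_gle cjz].
have [Cj [bj [cj j_least]]] := bcj; have [Lzjz [b_jz [c_jz _]]] := bcjz.
apply: gle_anti; first exact: (block_lub_gle Lzb Lzc bcjz bj cj).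
apply: j_least; first by exists (x `|` y)%O.
- exact: (block_le_gle Lzb Lzjz b_jz).
- exact: (block_le_gle Lzc Lzjz c_jz).
Qed.

Lemma cover_in_greatest_block u c w : covers gcar gle u c -> L w u ->
  (forall y, L y u -> (y <= w)%O) -> L w c.
Proof.
move=> uc Lwu w_max; have [x [Lxu [Lxc xuc]]] := gle_cover_step uc.
have xw : (x <= w)%O := le_trans (leUl x w) (w_max _ (overlap_meet_join Lxu Lwu).2).
exact: block_up_closed xw Lxu Lwu Lxc xuc.
Qed.

Lemma gle_breadth n : semimodular gcar gle -> (forall x, breadth_le (L x) (le x) n) ->
  breadth_le gcar gle n.
Proof.
move=> sm block_breadth m phi Cphi phi_emb.
have [u [c [Y [Cu uc YP cY ncY]]]] :=
  boolean_cube_covers gle_poset gle_lt_wf gle_gt_wf gle_lub_exists sm Cphi phi_emb.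
have Cc k : gcar (c k) by have [_ [Cck _]] := uc k.
have [psi [psiP psi_emb]] := lub_seq_boolean_embedding gle_poset gle_lub_exists Cu Cc YP cY ncY.
have [w [Lwu w_max]] := greatest_block Cu.
have [tw [Lwtw tw_max]] := block_top_exists Lwu.
have Lwc k := cover_in_greatest_block (uc k) Lwu w_max.
have Lwpsi X : L w (psi X).
  have [_ upsi _ psi_least] := psiP X; apply: (block_interval_closed Lwu Lwtw upsi).
  apply: psi_least; first by exists w.
    exact: (block_le_gle Lwu Lwtw (tw_max u Lwu)).
  by move=> i _; apply: (block_le_gle (Lwc i) Lwtw (tw_max _ (Lwc i))).
apply: (block_breadth w m psi Lwpsi) => X Z; rewrite -psi_emb.
split=> [XZ|XZ]; first exact: (block_le_gle (Lwpsi X) (Lwpsi Z) XZ).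
exact: (gle_block_le XZ (Lwpsi X) (Lwpsi Z)).
Qed.

End GluedSum.

Theorem theorem3p3 (n : nat) (d : Order.disp_t) (S : latticeType d) (U : Type)
    (L : S -> U -> Prop) (le : S -> U -> U -> Prop) :
  glued_system L le ->
  (forall x, semimodular (L x) (le x) /\ breadth_le (L x) (le x) n) ->
  semimodular (glued_carrier L) (glued_le L le) /\
  breadth_le (glued_carrier L) (glued_le L le) n.
Proof.
move=> [S_fin [blocks [filter_ideal [agree [cover_ov meet_join]]]]] block_props.
have sm := gle_semimodular S_fin blocks filter_ideal agree cover_ov meet_join
  (fun x => (block_props x).1).
split=> //; exact: (gle_breadth S_fin blocks filter_ideal agree cover_ov meet_join sm
  (fun x => (block_props x).2)).
Qed.
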